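(* Let $\mathcal{X}$ be an input space and $X$ a random input in $\mathcal{X}$. Let $u_1,\dots,u_K$ be fixed probability densities on $[0,1]$ and $\gamma,\rho:\mathcal{X}\to\{1,\dots,K\}$ fixed maps. Let $S\in[0,1]$ and $C\in[0,1]$ be random variables such that conditionally on $X=x$, $S$ has density $u_{\gamma(x)}$, $C$ has density $u_{\rho(x)}$, and $S$ and $C$ are conditionally independent given $X$. Let $Y=\mathbf{1}[C\ge \tfrac12]$. Let $x_1,\dots,x_N$ be i.i.d. copies of $X$, let $I_1,\dots,I_M$ be intervals partitioning $[0,1]$, and fix $m$ with $P(S\in I_m)>0$. Define $$\hat r_m=\frac{\frac1N\sum_{n=1}^N P(S\in I_m\mid X=x_n)\,P(C\ge \tfrac12\mid X=x_n)}{\frac1N\sum_{n=1}^N P(S\in I_m\mid X=x_n)}.$$ Then $\hat r_m$ is a consistent estimator of $\mathbb{E}[Y\mid S\in I_m]$ as $N\to\infty$.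
   Context: This models calibration estimation with uncertain ground-truth labels: instead of binary labels, one observes for each sample a confidence distribution $u_{\rho(x_n)}$ (from a certainty phrase in the ground-truth text), and the latent label is $Y=\mathbf{1}[C\ge 1/2]$ with $C$ drawn from that distribution. Here $P(S\in I_m\mid X=x_n)=\int_{I_m}u_{\gamma(x_n)}(s)\,ds$ and $P(C\ge\tfrac12\mid X=x_n)=\int_{1/2}^1 u_{\rho(x_n)}(c)\,dc$. *)

From HB Require Import structures.
From mathcomp Require Import all_boot all_order all_algebra.
From mathcomp Require Import all_classical all_reals all_analysis.
Set Implicit Arguments. Unset Strict Implicit. Unset Printing Implicit Defensive.
Import Order.TTheory GRing.Theory Num.Theory.
Import numFieldNormedType.Exports.
Local Open Scope classical_set_scope.
Local Open Scope ring_scope.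

Definition dens_prob (R : realType) (f : R -> R) (B : set R) : R :=
  fine (\int[lebesgue_measure]_(s in B `&` `[0%R, 1%R]) (f s)%:E)%E.

Definition is_density01 (R : realType) (f : R -> R) : Prop :=
  measurable_fun (`[0%R, 1%R] : set R) f /\
  (forall s : R, 0 <= s <= 1 -> 0 <= f s) /\
  (\int[lebesgue_measure]_(s in `[0%R, 1%R]) (f s)%:E = 1)%E.

Definition cexp_event d (Omega : measurableType d) (R : realType)
  (P : probability Omega R) (Y : Omega -> R) (E : set Omega) : R :=
  fine (\int[P]_(w in E) (Y w)%:E)%E / fine (P E).

Definition iid_copies d dT (Omega : measurableType d) (T : measurableType dT)
  (R : realType) (P : probability Omega R) (X : Omega -> T)
  (xs : nat -> Omega -> T) : Prop :=
  (forall n, measurable_fun setT (xs n)) /\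
  (forall n (A : set T), measurable A -> P (xs n @^-1` A) = P (X @^-1` A)) /\
  (forall (J : seq nat) (A : nat -> set T), uniq J ->
     (forall i, measurable (A i)) ->
     P (\bigcap_(i in [set i | i \in J]) (xs i @^-1` A i)) =
     (\big[*%E/1%E]_(i <- J) P (xs i @^-1` A i))%E).

Definition cvg_in_prob d (Omega : measurableType d) (R : realType)
  (P : probability Omega R) (Z : nat -> Omega -> R) (r : R) : Prop :=
  forall eps : R, 0 < eps ->
    (P [set w | eps <= `|Z N w - r|]) @[N --> \oo] --> 0%E.

From HB Require Import structures.
From mathcomp Require Import all_boot all_order all_algebra.
From mathcomp Require Import all_classical all_reals all_analysis.
From mathcomp Require Import ring lra.
Set Implicit Arguments.
Unset Strict Implicit.
Unset Printing Implicit Defensive.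

Import Order.TTheory GRing.Theory Num.Theory.
Import numFieldNormedType.Exports.
Local Open Scope classical_set_scope.
Local Open Scope ring_scope.

(* Since gamma and rho take finitely many values, the estimator depends on the
   sample only through the labels (gamma x_n, rho x_n), which are i.i.d. with a
   law p on a finite set; the probability that it deviates from its target is a
   finite sum of product weights over label patterns.  Numerator and denominator
   are sample means of functions of the labels, so by Chebyshev's inequality each
   is within any tolerance of its p-mean outside an event of probability O(1/N),
   and the ratio of two such quantities is then close to the ratio of the
   p-means.  The conditional law of (S, C) given X identifies these p-means with
   E[Y 1{S in I_m}] and P(S in I_m). *)

Lemma ler_sum_cover2 (R : numDomainType) (J : finType) (F : J -> R)
    (A B1 B2 : pred J) :
  (forall j, 0 <= F j) -> (forall j, A j -> B1 j || B2 j) ->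
  \sum_(j | A j) F j <= \sum_(j | B1 j) F j + \sum_(j | B2 j) F j.
Proof.
move=> F_ge0 AB; rewrite big_mkcond [X in _ <= X + _]big_mkcond.
rewrite [X in _ <= _ + X]big_mkcond -big_split /=.
apply: ler_sum => j _; case Aj: (A j); last by apply: addr_ge0; case: ifP.
by move: (AB j Aj); case: (B1 j); case: (B2 j); rewrite ?addr0 ?add0r ?lerDl.
Qed.

Definition ratio_tol (R : numFieldType) (a b eps : R) : R :=
  eps * b ^+ 2 / (2 * (b + `|a|) + 2 * eps * b).

Lemma ratio_tol_gt0 (R : realFieldType) (a b eps : R) :
  0 < b -> 0 < eps -> 0 < ratio_tol a b eps.
Proof.
move=> b_gt0 eps_gt0; have ap := normr_ge0 a; have ebp := mulr_gt0 eps_gt0 b_gt0.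
by apply: divr_gt0; [apply: mulr_gt0; rewrite ?exprn_gt0 | lra].
Qed.

Lemma ratio_tol_lt (R : realFieldType) (a b eps x y : R) : 0 < b -> 0 < eps ->
  `|x - a| < ratio_tol a b eps ->
  `|y - b| < ratio_tol a b eps -> `|x / y - a / b| < eps.
Proof.
move=> b_gt0 eps_gt0 xa yb; set dl := ratio_tol a b eps in xa yb.
have dl_gt0 : 0 < dl := ratio_tol_gt0 a b_gt0 eps_gt0.
have ebp := mulr_gt0 eps_gt0 b_gt0; have ap := normr_ge0 a.
have dl_eq : dl * (2 * (b + `|a|) + 2 * eps * b) = eps * b ^+ 2.
  by rewrite /dl /ratio_tol mulrVK // unitfE gt_eqF //; lra.
have dl_le : 2 * dl <= b.
  have : 0 <= dl * (2 * (b + `|a|)) by apply: mulr_ge0; lra.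
  by rewrite expr2 in dl_eq; nra.
have y_lb : b - dl < y.
  have /andP[yb1 _] : - dl < y - b < dl by rewrite -ltr_norml.
  by lra.
have yb_gt0 : 0 < y * b by apply: mulr_gt0 => //; lra.
have -> : x / y - a / b = (x * b - a * y) / (y * b).
  by field; rewrite !gt_eqF //; lra.
rewrite normrM normfV (gtr0_norm yb_gt0) ltr_pdivrMr //.
have num_le : `|x * b - a * y| <= `|x - a| * b + `|a| * `|y - b|.
  rewrite (_ : x * b - a * y = (x - a) * b - a * (y - b)); last by ring.
  by apply: (le_trans (ler_normB _ _)); rewrite !normrM (gtr0_norm b_gt0).
(* |x b - a y| < dl (b + |a|), and dl was chosen so that this is at most
   eps b (b - dl) < eps b y *)
have V_ge0 := normr_ge0 (y - b).
have p1 : 0 < (dl - `|x - a|) * b by apply: mulr_gt0; lra.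
have p2 : 0 <= `|a| * (dl - `|y - b|) by apply: mulr_ge0; lra.
have p3 : 0 < eps * b * (y - (b - dl)) by apply: mulr_gt0; lra.
by rewrite expr2 in dl_eq; nra.
Qed.

Definition sample_mean (R : numFieldType) (Q : Type) (N : nat) (f : Q -> R)
    (s : 'I_N -> Q) : R :=
  N%:R^-1 * \sum_(n < N) f (s n).

Section ProductWeights.
Variables (R : realFieldType) (Q : finType) (p : Q -> R).
Hypotheses (p_ge0 : forall q, 0 <= p q) (p_sum1 : \sum_q p q = 1).

Definition pmean (f : Q -> R) : R := \sum_q p q * f q.

Definition pvar (f : Q -> R) : R := pmean (fun q => (f q - pmean f) ^+ 2).

Definition prod_weight (N : nat) (s : {ffun 'I_N -> Q}) : R :=
  \prod_(n < N) p (s n).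

Lemma prod_weight_ge0 N s : 0 <= @prod_weight N s.
Proof. exact: prodr_ge0. Qed.

Lemma pmean_sub_mean f : pmean (fun q => f q - pmean f) = 0.
Proof.
rewrite /pmean; under eq_bigr do rewrite mulrBr.
by rewrite sumrB -mulr_suml p_sum1 mul1r subrr.
Qed.

Lemma sum_prod_weight_mul N (g : Q -> R) (n n' : 'I_N) : pmean g = 0 ->
  \sum_(s : {ffun 'I_N -> Q}) prod_weight s * (g (s n) * g (s n')) =
  if n == n' then pmean (fun q => g q ^+ 2) else 0.
Proof.
move=> g_centred.
pose G k q := p q * (if k == n then g q else 1) * (if k == n' then g q else 1).
have -> : \sum_(s : {ffun 'I_N -> Q}) prod_weight s * (g (s n) * g (s n')) =
          \prod_(k < N) \sum_q G k q.
  (* a sum over all patterns of coordinatewise products factorises *)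
  rewrite bigA_distr_bigA; apply: eq_bigr => s _.
  by rewrite /G /prod_weight !big_split /= -!big_mkcond /= !big_pred1_eq mulrA.
have G_off k : k != n -> k != n' -> \sum_q G k q = 1.
  move=> /negPf kn /negPf kn'; rewrite -p_sum1.
  by apply: eq_bigr => q _; rewrite /G kn kn' !mulr1.
rewrite (bigD1 n) //=; case: (eqVneq n n') => [nn' | nn'].
  rewrite [X in _ * X]big1 => [|k kn]; last by rewrite G_off // -nn'.
  by rewrite mulr1; apply: eq_bigr => q _; rewrite /G -nn' eqxx -mulrA expr2.
rewrite (bigD1 n') 1?eq_sym //= mulrA.
have -> : \sum_q G n' q = 0.
  rewrite -[X in _ = X]g_centred; apply: eq_bigr => q _.
  by rewrite /G eqxx eq_sym (negPf nn') mulr1.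
by rewrite mulr0 mul0r.
Qed.

Lemma sum_prod_weight_sqr N (g : Q -> R) : pmean g = 0 ->
  \sum_(s : {ffun 'I_N -> Q}) prod_weight s * (\sum_(n < N) g (s n)) ^+ 2 =
  N%:R * pmean (fun q => g q ^+ 2).
Proof.
move=> g_centred.
under eq_bigr do rewrite expr2 big_distrlr /= mulr_sumr.
under eq_bigr do under eq_bigr do rewrite mulr_sumr.
rewrite exchange_big /=; under eq_bigr do rewrite exchange_big /=.
under eq_bigr do under eq_bigr do rewrite sum_prod_weight_mul //.
under eq_bigr => n _ do rewrite -big_mkcond (big_pred1 n) 1?eq_sym //.
by rewrite sumr_const card_ord mulr_natl.
Qed.

(* Chebyshev: the sample mean of N independent draws has variance pvar f / N. *)
Lemma prod_weight_sample_mean_dev N (f : Q -> R) (eps : R) :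
  0 < eps -> (0 < N)%N ->
  \sum_(s : {ffun 'I_N -> Q} | eps <= `|sample_mean f s - pmean f|) prod_weight s
    <= pvar f / eps ^+ 2 / N%:R.
Proof.
move=> eps_gt0 N_gt0; set g := fun q => f q - pmean f.
have N_neq0 : (N%:R : R) != 0 by rewrite pnatr_eq0 -lt0n.
have eps2_gt0 : 0 < eps ^+ 2 by rewrite exprn_gt0.
pose chi (s : {ffun 'I_N -> Q}) :=
  prod_weight s * ((sample_mean f s - pmean f) ^+ 2 / eps ^+ 2).
have markov (s : {ffun 'I_N -> Q}) :
    eps <= `|sample_mean f s - pmean f| -> prod_weight s <= chi s.
  move=> dev_ge; rewrite -{1}[prod_weight s]mulr1 ler_wpM2l ?prod_weight_ge0 //.
  rewrite ler_pdivlMr // mul1r -[leRHS]real_normK ?num_real //.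
  by rewrite ler_sqr ?nnegrE ?normr_ge0 //; exact: ltW.
have chi_ge0 s : 0 <= chi s.
  by rewrite mulr_ge0 ?prod_weight_ge0 ?divr_ge0 ?sqr_ge0.
have dev_eq s : sample_mean f s - pmean f = N%:R^-1 * \sum_(n < N) g (s n).
  rewrite /sample_mean /g sumrB sumr_const card_ord mulrBr -[pmean f *+ N]mulr_natl.
  by rewrite mulrA mulVf // mul1r.
have sum_chi : \sum_s chi s = pvar f / eps ^+ 2 / N%:R.
  have -> : \sum_s chi s = N%:R^-2 / eps ^+ 2 *
      \sum_(s : {ffun 'I_N -> Q}) prod_weight s * (\sum_(n < N) g (s n)) ^+ 2.
    rewrite mulr_sumr; apply: eq_bigr => s _; rewrite /chi dev_eq; field.
    by rewrite N_neq0 gt_eqF.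
  rewrite sum_prod_weight_sqr ?pmean_sub_mean // /g /pvar /=; field.
  by rewrite N_neq0 gt_eqF.
rewrite -sum_chi (le_trans (ler_sum _ markov)) //.
rewrite [leRHS](bigID (fun s : {ffun 'I_N -> Q} =>
  eps <= `|sample_mean f s - pmean f|)) /= lerDl.
exact: sumr_ge0.
Qed.

Lemma prod_weight_sample_ratio_dev N (f g : Q -> R) (eps : R) :
  0 < pmean g -> 0 < eps -> (0 < N)%N ->
  \sum_(s : {ffun 'I_N -> Q} |
        eps <= `|sample_mean f s / sample_mean g s - pmean f / pmean g|)
    prod_weight s
  <= (pvar f + pvar g) / ratio_tol (pmean f) (pmean g) eps ^+ 2 / N%:R.
Proof.
move=> g_gt0 eps_gt0 N_gt0; set dl := ratio_tol _ _ eps.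
have dl_gt0 : 0 < dl by exact: ratio_tol_gt0.
rewrite !mulrDl; apply: le_trans (lerD (prod_weight_sample_mean_dev f dl_gt0 N_gt0)
                                      (prod_weight_sample_mean_dev g dl_gt0 N_gt0)).
apply: ler_sum_cover2 => [s|s]; first exact: prod_weight_ge0.
rewrite !leNgt; apply: contraLR; rewrite negb_or !negbK => /andP[fs gs].
exact: ratio_tol_lt.
Qed.

End ProductWeights.

Lemma cvg_EFin_le_invn (R : realType) (r : nat -> R) (C : R) :
  (forall N, (0 < N)%N -> 0 <= r N <= C / N%:R) -> (r N)%:E @[N --> \oo] --> 0%E.
Proof.
move=> r_bound; apply: cvg_EFin; first exact: nearW.
have invn_cvg0 : (N%:R^-1 : R) @[N --> \oo] --> 0.
  apply/gtr0_cvgV0; last exact: cvgr_idn.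
  by near=> N; rewrite ltr0n; near: N; exact: nbhs_infty_gt.
apply: (squeeze_cvgr (f := fun=> 0) (h := fun N => C / N%:R)).
- by near=> N; apply: r_bound; near: N; exact: nbhs_infty_gt.
- exact: cvg_cst.
- by rewrite -(mulr0 C); exact: cvgMl_tmp.
Unshelve. all: by end_near.
Qed.

Lemma measurableT_preimage d d' (aT : measurableType d) (rT : measurableType d')
    (f : aT -> rT) (A : set rT) :
  measurable_fun setT f -> measurable A -> measurable (f @^-1` A).
Proof. by move=> mf mA; rewrite -[f @^-1` A]setTI; exact: mf. Qed.

Lemma measure_fintype_bigcup d (T : measurableType d) (R : realType)
    (mu : {measure set T -> \bar R}) (J : finType) (F : J -> set T) :
  (forall j, measurable (F j)) -> trivIset setT F ->
  mu (\bigcup_j F j) = (\sum_j mu (F j))%E.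
Proof.
move=> mF tF; rewrite measure_fin_bigcup //; last exact: finite_finset.
rewrite (fsbigE (enum J)) ?enum_uniq //; last by move=> j _; rewrite mem_enum.
by rewrite big_enum_cond /=; apply: eq_bigl => j; rewrite in_setT.
Qed.

Section SamplePatterns.
Context {d dT : measure_display} {Omega : measurableType d} {T : measurableType dT}.
Context {R : realType} (P : probability Omega R) (X : Omega -> T).
Context (Q : finType) (cls : T -> Q) (xs : nat -> Omega -> T).
Hypotheses (mX : measurable_fun setT X)
  (mcls : forall q, measurable (cls @^-1` [set q])).

Definition class_prob (q : Q) : R := fine (P (X @^-1` (cls @^-1` [set q]))).

Lemma class_probE q : P (X @^-1` (cls @^-1` [set q])) = (class_prob q)%:E.
Proof. by rewrite fineK //; apply: fin_num_measure; exact: measurableT_preimage. Qed.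

Lemma class_prob_ge0 q : 0 <= class_prob q.
Proof. exact/fine_ge0/measure_ge0. Qed.

Lemma measure_class_split (Z : set Omega) : measurable Z ->
  P Z = (\sum_q P (X @^-1` (cls @^-1` [set q]) `&` Z))%E.
Proof.
move=> mZ; rewrite -measure_fintype_bigcup.
- by congr (P _); apply/seteqP; split => [w Zw | w [q _ []]] //; exists (cls (X w)).
- by move=> q; apply: measurableI => //; exact: measurableT_preimage.
- by move=> q q' _ _ [w [[/= <- _] [/= <- _]]].
Qed.

Lemma class_prob_sum1 : \sum_q class_prob q = 1.
Proof.
apply: EFin_inj; rewrite -sumEFin -(probability_setT P) (measure_class_split measurableT).
by apply: eq_bigr => q _; rewrite setIT class_probE.
Qed.

Hypothesis xs_iid : iid_copies P X xs.

Definition pattern_event N (s : {ffun 'I_N -> Q}) : set Omega :=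
  [set w | [ffun n : 'I_N => cls (xs n w)] = s].

(* The pattern event is the intersection over all [i < N] of the events
   [xs i \in cls^-1 (s i)]; the filler [setT] makes the index [i] total. *)
Let pattern_constraint N (s : {ffun 'I_N -> Q}) (i : nat) : set T :=
  if insub i is Some j then cls @^-1` [set s j] else setT.

Let pattern_eventE N (s : {ffun 'I_N -> Q}) : pattern_event s =
  \bigcap_(i in [set i | i \in iota 0 N]) (xs i @^-1` pattern_constraint s i).
Proof.
apply/seteqP; split => w /=.
- move=> <- i /=; rewrite mem_iota add0n => /= iN.
  by rewrite /pattern_constraint; case: insubP => //= j _ <-; rewrite ffunE.
- move=> Cw; apply/ffunP => j; rewrite ffunE.
  have /= := Cw (val j); rewrite /pattern_constraint valK; apply.
  by rewrite /= mem_iota add0n ltn_ord.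
Qed.

Lemma measurable_pattern_event N (s : {ffun 'I_N -> Q}) :
  measurable (pattern_event s).
Proof.
have [mxs _] := xs_iid; rewrite pattern_eventE; apply: bigcap_measurableType => i _.
by apply: measurableT_preimage => //; rewrite /pattern_constraint; case: insub.
Qed.

Lemma prob_pattern_event N (s : {ffun 'I_N -> Q}) :
  P (pattern_event s) = (prod_weight class_prob s)%:E.
Proof.
have [_ [law indep]] := xs_iid.
rewrite pattern_eventE indep ?iota_uniq //; last first.
  by move=> i; rewrite /pattern_constraint; case: insub.
rewrite -{1}(subn0 N) -/(index_iota 0 N) big_mkord -prodEFin.
apply: eq_bigr => i _.
by rewrite law /pattern_constraint valK ?class_probE.
Qed.

Lemma prob_sample_pattern N (pr : pred {ffun 'I_N -> Q}) :
  P [set w | pr [ffun n : 'I_N => cls (xs n w)]] =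
  (\sum_(s | pr s) prod_weight class_prob s)%:E.
Proof.
have -> : [set w | pr [ffun n : 'I_N => cls (xs n w)]] =
    \bigcup_s (if pr s then pattern_event s else set0).
  apply/seteqP; split => [w prw | w [s _]] /=.
    by exists [ffun n : 'I_N => cls (xs n w)]; rewrite ?prw.
  by case: ifP => // prs; rewrite /pattern_event /= => ->.
rewrite measure_fintype_bigcup.
- rewrite -sumEFin [RHS]big_mkcond; apply: eq_bigr => s _.
  by case: ifP => _; [exact: prob_pattern_event | exact: measure0].
- by move=> s; case: ifP => _; [exact: measurable_pattern_event | exact: measurable0].
- move=> s s' _ _ [w []]; rewrite /pattern_event.
  by case: ifP => _ //= <-; case: ifP => _ //=.
Qed.

Lemma sample_ratio_cvg_in_prob (f g : Q -> R) : 0 < pmean class_prob g ->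
  cvg_in_prob P (fun N w => sample_mean f (fun n : 'I_N => cls (xs n w)) /
                            sample_mean g (fun n : 'I_N => cls (xs n w)))
    (pmean class_prob f / pmean class_prob g).
Proof.
move=> g_gt0 eps eps_gt0; set r := pmean _ f / _.
have pattern_mean N w (h : Q -> R) :
    sample_mean h [ffun n : 'I_N => cls (xs n w)] =
    sample_mean h (fun n : 'I_N => cls (xs n w)).
  by rewrite /sample_mean; under eq_bigr do rewrite ffunE.
pose dev N (s : {ffun 'I_N -> Q}) :=
  eps <= `|sample_mean f s / sample_mean g s - r|.
under eq_fun => N.
  rewrite (_ : [set w | _] = [set w | dev N [ffun n : 'I_N => cls (xs n w)]]).
    by rewrite prob_sample_pattern; over.
  by apply/seteqP; split => w; rewrite /dev /= !pattern_mean.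
apply: cvg_EFin_le_invn => N N_gt0; apply/andP; split.
  by apply: sumr_ge0 => s _; exact/prod_weight_ge0/class_prob_ge0.
apply: prod_weight_sample_ratio_dev => //.
- exact: class_prob_ge0.
- exact: class_prob_sum1.
Qed.

End SamplePatterns.

Section ThresholdModel.
Context {R : realType} {d dT : measure_display} {Omega : measurableType d}.
Context {T : measurableType dT} (P : probability Omega R).
Context (K : nat) (u : 'I_K -> R -> R) (gamma rho : T -> 'I_K).
Context (X : Omega -> T) (S C : Omega -> R).
Hypotheses (u_dens : forall k, is_density01 (u k))
  (gamma_m : forall k, measurable (gamma @^-1` [set k]))
  (rho_m : forall k, measurable (rho @^-1` [set k]))
  (mX : measurable_fun setT X) (mS : measurable_fun setT S)
  (mC : measurable_fun setT C).
Hypothesis cond_law : forall (A : set T) (B D : set R),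
  measurable A -> measurable B -> measurable D ->
  P (X @^-1` A `&` S @^-1` B `&` C @^-1` D) =
  (\int[P]_(w in X @^-1` A)
     (dens_prob (u (gamma (X w))) B * dens_prob (u (rho (X w))) D)%:E)%E.

Definition labels (x : T) : 'I_K * 'I_K := (gamma x, rho x).

Lemma measurable_labels q : measurable (labels @^-1` [set q]).
Proof.
case: q => k l; rewrite (_ : _ @^-1` _ = gamma @^-1` [set k] `&` rho @^-1` [set l]).
  exact: measurableI.
by apply/seteqP; split => x /=; rewrite /labels => -[-> ->].
Qed.

Let p := class_prob P X labels.

Lemma prob_S_C_preimage (B D : set R) : measurable B -> measurable D ->
  P (S @^-1` B `&` C @^-1` D) =
  (pmean p (fun q => dens_prob (u q.1) B * dens_prob (u q.2) D))%:E.
Proof.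
move=> mB mD; rewrite (measure_class_split P mX measurable_labels); last first.
  by apply: measurableI; exact: measurableT_preimage.
rewrite -sumEFin; apply: eq_bigr => -[k l] _.
have mA := measurable_labels (k, l).
rewrite setIA cond_law // (eq_integral (cst (dens_prob (u k) B * dens_prob (u l) D)%:E)).
  rewrite integral_cst; last exact: measurableT_preimage.
  rewrite [X in (_ * X)%E](_ : _ = (p (k, l))%:E); first by rewrite -EFinM mulrC.
  exact: (class_probE P mX measurable_labels).
by move=> w; rewrite in_setE /labels /= => -[-> ->].
Qed.

Lemma prob_S_preimage (B : set R) : measurable B ->
  P (S @^-1` B) = (pmean p (fun q => dens_prob (u q.1) B))%:E.
Proof.
move=> mB; rewrite -[S @^-1` B]setIT -(preimage_setT C) prob_S_C_preimage //.
congr (_%:E); apply: eq_bigr => q _.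
by rewrite /dens_prob setTI (proj2 (proj2 (u_dens q.2))) mulr1.
Qed.

Lemma cexp_event_threshold (B : set R) : measurable B ->
  cexp_event P (fun w => if 1 / 2 <= C w then 1 else 0) (S @^-1` B) =
  pmean p (fun q => dens_prob (u q.1) B * dens_prob (u q.2) `[1 / 2, 1]) /
  pmean p (fun q => dens_prob (u q.1) B).
Proof.
move=> mB; rewrite /cexp_event prob_S_preimage //=; congr (_ / _).
rewrite (eq_integral (fun w => (\1_(C @^-1` `[1 / 2, +oo[) w)%:E)); last first.
  move=> w _; rewrite indicE; case: ifP => h.
    by rewrite mem_set //= in_itv /= h.
  by rewrite memNset //= in_itv /= h.
rewrite integral_indic; [|exact: measurableT_preimage..].
transitivity (fine (P (S @^-1` B `&` C @^-1` `[1 / 2, +oo[))); first by rewrite setIC.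
rewrite prob_S_C_preimage //=; apply: eq_bigr => q _; congr (_ * (_ * _)).
(* [C >= 1/2] and [C \in [1/2, 1]] agree on the support [0, 1] of the densities *)
rewrite /dens_prob; congr (fine (integral _ _ _)).
apply/seteqP; split => x /=; rewrite !in_itv /= ?andbT.
- by move=> [-> /andP[-> ->]]; split.
- by move=> [/andP[-> _] ->].
Qed.

End ThresholdModel.

Theorem mainTheorem2
  (R : realType) (d : measure_display) (Omega : measurableType d)
  (P : probability Omega R)
  (dT : measure_display) (T : measurableType dT)
  (K : nat) (u : 'I_K -> R -> R) (gamma rho : T -> 'I_K)
  (X : Omega -> T) (S C : Omega -> R)
  (M : nat) (I : 'I_M -> set R) (m : 'I_M)
  (xs : nat -> Omega -> T) :
  (forall k, is_density01 (u k)) ->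
  (forall k, measurable (gamma @^-1` [set k])) ->
  (forall k, measurable (rho @^-1` [set k])) ->
  measurable_fun setT X -> measurable_fun setT S -> measurable_fun setT C ->
  (* conditional on X = x: S has density u_(gamma x), C has density
     u_(rho x), and S, C are conditionally independent *)
  (forall (A : set T) (B D : set R), measurable A -> measurable B -> measurable D ->
     P (X @^-1` A `&` S @^-1` B `&` C @^-1` D) =
     (\int[P]_(w in X @^-1` A)
        (dens_prob (u (gamma (X w))) B * dens_prob (u (rho (X w))) D)%:E)%E) ->
  (* I_1, ..., I_M are intervals partitioning [0,1] *)
  (forall k, exists i : interval R, I k = [set` i]) ->
  (forall k1 k2, k1 != k2 -> I k1 `&` I k2 = set0) ->
  \bigcup_(k in setT) I k = `[0%R, 1%R]%classic ->
  (0 < P (S @^-1` I m))%E ->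
  iid_copies P X xs ->
  let Y := fun w => if 1 / 2 <= C w then 1 else 0 : R in
  let pS := fun x => dens_prob (u (gamma x)) (I m) in
  let pC := fun x => dens_prob (u (rho x)) `[1 / 2, 1]%classic in
  let rhat := fun (N : nat) (w : Omega) =>
    ((N%:R)^-1 * \sum_(n < N) pS (xs n w) * pC (xs n w)) /
    ((N%:R)^-1 * \sum_(n < N) pS (xs n w)) in
  cvg_in_prob P rhat (cexp_event P Y (S @^-1` I m)).
Proof.
(* Only the bin I m enters the estimator and its target. *)
move=> u_dens gamma_m rho_m mX mS mC cond_law I_itv _ _ Sm_pos xs_iid Y pS pC rhat.
have mIm : measurable (I m) by have [i ->] := I_itv m; exact: measurable_itv.
rewrite /Y (cexp_event_threshold u_dens gamma_m rho_m mX mS mC cond_law mIm).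
apply: (sample_ratio_cvg_in_prob mX (measurable_labels gamma_m rho_m) xs_iid
  (fun q => dens_prob (u q.1) (I m) * dens_prob (u q.2) `[1 / 2, 1])
  (g := fun q => dens_prob (u q.1) (I m))).
by rewrite -lte_fin -(prob_S_preimage u_dens gamma_m rho_m mX mS mC cond_law mIm).
Qed.
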